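(* Let $\ell^\infty\neq0$ be a complex constant. For $k\in\{1,2\}$ let $\Sigma^{(k)}$ be finite disjoint index sets, and for $\alpha\in\Sigma^{(k)}$ let $m_\alpha\ge1$, $z_\alpha\in\mathbb C$ (pairwise distinct within each $\Sigma^{(k)}$), and $\ell^\alpha_{[p]}\in\mathbb C$ ($0\le p\le m_\alpha-1$) with $\ell^\alpha_{[m_\alpha-1]}\neq0$. Let $\chi_k(z)=\sum_{\alpha\in\Sigma^{(k)}}\sum_{p=0}^{m_\alpha-1}\frac{\ell^\alpha_{[p]}}{(z-z_\alpha)^{p+1}}$, $\varphi_k(z)=\chi_k(z)-\ell^\infty$, $M_k=\sum_{\alpha\in\Sigma^{(k)}}m_\alpha$, $M=M_1+M_2$. Assume the zeros of $\varphi_1$, labelled $\zeta^{(1)}_i$, $1\le i\le M_1$, and of $\varphi_2$, labelled $\zeta^{(2)}_i$, $M_1<i\le M$, are simple. For $\gamma\neq0$ let $\varphi_{1\otimes2,\gamma}(z)=\chi_1(z)+\chi_2(z-\gamma^{-1})-\ell^\infty$. Then for $\gamma$ small enough one can order the $M$ zeros $\zeta_i(\gamma)$ of $\varphi_{1\otimes2,\gamma}$ so that $\zeta_i(\gamma)$ is canonically associated with $\zeta^{(k)}_i$ ($k=1$ for $i\le M_1$, $k=2$ for $i>M_1$); more precisely this canonical labelling is the unique one satisfying $\zeta_i(\gamma)=\zeta^{(1)}_i+O(\gamma)$ for $i\in\{1,\dots,M_1\}$ and $\zeta_i(\gamma)=\frac1\gamma+\zeta^{(2)}_i+O(\gamma)$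 for $i\in\{M_1+1,\dots,M\}$. Moreover, for $\gamma$ small enough these zeros are simple. *)

From mathcomp Require Import all_boot all_order all_algebra.
From mathcomp Require Import complex.
From mathcomp Require Import reals.
Set Implicit Arguments. Unset Strict Implicit. Unset Printing Implicit Defensive.
Import Order.TTheory GRing.Theory Num.Theory.
Local Open Scope ring_scope.

Section Defs.
Variable R : realType.
Local Notation C := R[i].

Definition rC (x : R) : C := Complex x 0.

Definition chi (S : finType) (m : S -> nat) (zp : S -> C) (l : S -> nat -> C)
  (x : C) : C :=
  \sum_(a : S) \sum_(p < m a) l a p / (x - zp a) ^+ p.+1.

(* its derivative (valid away from the poles):
   chi'(z) = sum sum -(p+1) l^alpha_[p] / (z - z_alpha)^(p+2) *)
Definition dchi (S : finType) (m : S -> nat) (zp : S -> C) (l : S -> nat -> C)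
  (x : C) : C :=
  \sum_(a : S) \sum_(p < m a) - (p.+1)%:R * l a p / (x - zp a) ^+ p.+2.

Definition phi (S : finType) m zp l (linf : C) (x : C) : C := @chi S m zp l x - linf.

Definition phi12 (S1 : finType) m1 zp1 l1 (S2 : finType) m2 zp2 l2 (linf gam x : C) : C :=
  @chi S1 m1 zp1 l1 x + @chi S2 m2 zp2 l2 (x - gam^-1) - linf.

Definition dphi12 (S1 : finType) m1 zp1 l1 (S2 : finType) m2 zp2 l2 (gam x : C) : C :=
  @dchi S1 m1 zp1 l1 x + @dchi S2 m2 zp2 l2 (x - gam^-1).

Definition is_zero1 (S : finType) m (zp : S -> C) l linf (x : C) : Prop :=
  (forall a, x != zp a) /\ @phi S m zp l linf x = 0.

Definition simple_zero1 (S : finType) m (zp : S -> C) l linf (x : C) : Prop :=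
  @is_zero1 S m zp l linf x /\ @dchi S m zp l x != 0.

Definition is_zero12 (S1 : finType) m1 (zp1 : S1 -> C) l1 (S2 : finType) m2 (zp2 : S2 -> C) l2
  (linf gam x : C) : Prop :=
  (forall a, x != zp1 a) /\ (forall b, x != zp2 b + gam^-1) /\
  @phi12 S1 m1 zp1 l1 S2 m2 zp2 l2 linf gam x = 0.

Definition simple_zero12 (S1 : finType) m1 (zp1 : S1 -> C) l1 (S2 : finType) m2 (zp2 : S2 -> C) l2
  (linf gam x : C) : Prop :=
  @is_zero12 S1 m1 zp1 l1 S2 m2 zp2 l2 linf gam x /\
  @dphi12 S1 m1 zp1 l1 S2 m2 zp2 l2 gam x != 0.

Definition labelling (n : nat) (Z : C -> Prop) (zeta : 'I_n -> C) : Prop :=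
  injective zeta /\ (forall i, Z (zeta i)) /\ (forall x, Z x -> exists i, zeta i = x).

End Defs.

From mathcomp Require Import all_boot all_order all_algebra.
From mathcomp Require Import complex.
From mathcomp Require Import reals.
From mathcomp Require Import ring lra.
From Stdlib Require Import ClassicalEpsilon FunctionalExtensionality.
Import Order.TTheory GRing.Theory Num.Theory Normc.
Set Implicit Arguments. Unset Strict Implicit. Unset Printing Implicit Defensive.
Local Open Scope ring_scope.

(* Clearing denominators, [phi_{1(x)2,g} = Q / D] where [Q] has degree [M] (its leading
   coefficient is [-linf]), so it has at most [M] zeros, and the roots [r] of [Q] satisfy
   [sum_r 1/(x - r) = D'(x)/D(x) + phi'(x)/phi(x)].  At a simple zero [zeta] of [phi_1],
   [phi_{1(x)2,g}(zeta) = chi_2(zeta - 1/g) = O(g)], its derivative stays close to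
   [phi_1'(zeta) != 0] and [D'/D(zeta)] stays bounded, so the sum is of size [1/|g|] and some
   root lies within [O(g)] of [zeta].  The zeros of [phi_2] are handled by the symmetry
   [phi_{1(x)2,g}(y + 1/g) = phi_{2(x)1,-g}(y)].  The [M] targets [zeta1_i] and
   [1/g + zeta2_j] are pairwise much further apart than [|g|], so this yields [M] distinct
   zeros: they are all the zeros of [Q], hence all simple, and any labelling with the same
   asymptotics must pick the same zero near each target. *)

Section ComplexModulus.
Variable R : rcfType.
Implicit Types x y : R[i].

Lemma normcE x : `|x| = ((normc x)%:C)%C.
Proof. by case: x. Qed.

Lemma normc_ge0 x : 0 <= normc x.
Proof. by rewrite -ler0c -normcE. Qed.

Lemma normc_eq0 x : (normc x == 0) = (x == 0).
Proof. by rewrite -(inj_eq (@complexI R)) -normcE rmorph0 normr_eq0. Qed.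

Lemma normc_gt0 x : (0 < normc x) = (x != 0).
Proof. by rewrite lt_def normc_eq0 normc_ge0 andbT. Qed.

Lemma normcB x y : normc (x - y) = normc (y - x).
Proof. by rewrite -normcN opprB. Qed.

Lemma normcX x n : normc (x ^+ n) = normc x ^+ n.
Proof. by apply: complexI; rewrite rmorphXn /= -!normcE normrX. Qed.

Lemma normc_nat n : normc n%:R = n%:R :> R.
Proof. by apply: complexI; rewrite -normcE normr_nat rmorph_nat. Qed.

Lemma lerB_distc x y : normc x - normc y <= normc (x - y).
Proof. by rewrite lerBlDr -{1}(subrK y x) le_normcD. Qed.

Lemma ler_normc_sum (I : Type) (s : seq I) (P : pred I) (F : I -> R[i]) :
  normc (\sum_(i <- s | P i) F i) <= \sum_(i <- s | P i) normc (F i).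
Proof.
apply: (big_ind2 (fun x a => normc x <= a)) => [|x1 a1 x2 a2 le1 le2|//].
  by rewrite normc0.
exact: le_trans (le_normcD _ _) (lerD le1 le2).
Qed.

End ComplexModulus.

Section NearZero.
Variable R : rcfType.
Implicit Types (P Q : R[i] -> Prop) (y g : R[i]).

Definition near0 P := exists2 d : R, 0 < d & forall g, g != 0 -> normc g < d -> P g.

Lemma near0_mono P Q : (forall g, g != 0 -> P g -> Q g) -> near0 P -> near0 Q.
Proof. by move=> PQ [d d0 dP]; exists d => // g g0 gd; apply/PQ/dP. Qed.

Lemma near0_and P Q : near0 P -> near0 Q -> near0 (fun g => P g /\ Q g).
Proof.
move=> [d1 d10 dP] [d2 d20 dQ]; exists (Num.min d1 d2); first by rewrite lt_min d10.
by move=> g g0; rewrite lt_min => /andP[g1 g2]; split; [apply: dP | apply: dQ].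
Qed.

Lemma near0_forall (T : finType) (P : T -> R[i] -> Prop) :
  (forall t, near0 (P t)) -> near0 (fun g => forall t, P t g).
Proof.
move=> Pnear; suff: forall s : seq T, near0 (fun g => forall t, t \in s -> P t g).
  by move=> /(_ (enum T)); apply: near0_mono => g _ Ps t; apply: Ps; rewrite mem_enum.
elim=> [|t s IHs]; first by exists 1 => // g _ _ t; rewrite in_nil.
apply: near0_mono (near0_and (Pnear t) IHs) => g _ [Pt Ps] u.
by rewrite in_cons => /predU1P[->|/Ps].
Qed.

Lemma near0_forall_bound (T : finType) (P : T -> R -> R[i] -> Prop) :
  (forall t K K' g, K <= K' -> P t K g -> P t K' g) ->
  (forall t, exists K, near0 (P t K)) -> exists K, near0 (fun g => forall t, P t K g).
Proof.
move=> P_mono /fin_all_exists[K PK]; exists (\sum_t `|K t|).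
apply: near0_forall => t; apply: near0_mono (PK t) => g _; apply: P_mono.
apply: le_trans (ler_norm _) _; rewrite (bigD1 t) //= lerDl.
by apply: sumr_ge0 => u _; apply: normr_ge0.
Qed.

Lemma near0_opp P : near0 P -> near0 (fun g => P (- g)).
Proof. by move=> [d d0 dP]; exists d => // g g0 gd; apply: dP; rewrite ?oppr_eq0 ?normcN. Qed.

Lemma near0_le (c : R) : 0 < c -> near0 (fun g => normc g <= c).
Proof. by move=> c0; exists c => // g _ /ltW. Qed.

Lemma near0_lt_mul (K d : R) : 0 < d -> near0 (fun g => K * normc g < d).
Proof.
move=> d0; exists (d / (`|K| + 1)) => [|g _ gd]; first by rewrite divr_gt0 ?ltr_pwDr.
move: gd; rewrite ltr_pdivlMr ?ltr_pwDr // => gd.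
apply: le_lt_trans (ler_wpM2r (normc_ge0 g) (ler_norm K)) _.
by have := normc_ge0 g; nra.
Qed.

(* [g (y - g^-1) = g y - 1] has modulus close to [1] *)
Lemma near0_inv_far y : near0 (fun g => 1 <= 2 * (normc g * normc (y - g^-1))).
Proof.
exists (2 * normc y + 1)^-1 => [|g g0]; first by rewrite invr_gt0; have := normc_ge0 y; lra.
rewrite -[_^-1]div1r ltr_pdivlMr; last by have := normc_ge0 y; lra.
have -> : normc g * normc (y - g^-1) = normc (1 - g * y).
  by rewrite -normcM normcB mulrBr mulfV.
have := lerB_distc 1 (g * y); rewrite normc1 normcM.
have := normc_ge0 g; nra.
Qed.

Lemma near0_far y (c : R) : near0 (fun g => c <= normc (y - g^-1)).
Proof.
have c0 : 0 < (2 * (`|c| + 1))^-1 by rewrite invr_gt0; have := normr_ge0 c; lra.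
apply: near0_mono (near0_and (near0_inv_far y) (near0_le c0)) => g g0 [far small].
have g0' : 0 < normc g by rewrite normc_gt0.
move: small; rewrite -[X in _ <= X]div1r ler_pdivlMr; last by have := normr_ge0 c; lra.
have := ler_norm c; have := normc_ge0 (y - g^-1); nra.
Qed.

End NearZero.

Section PoleSumsFar.
Variables (R : realType) (T : finType) (m : T -> nat) (zp : T -> R[i]).

Lemma pole_sum_far (F : T -> nat -> R[i]) (e : T -> nat -> nat) (y : R[i]) :
  exists B : R, near0 (fun g =>
    normc (\sum_a \sum_(p < m a) F a p / (y - g^-1 - zp a) ^+ (e a p).+1) <= B * normc g).
Proof.
exists (\sum_a \sum_(p < m a) 2 * normc (F a p)).
have far : near0 (fun g => forall a,
    1 <= normc (y - zp a - g^-1) /\ 1 <= 2 * (normc g * normc (y - zp a - g^-1))).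
  by apply: near0_forall => a; apply: near0_and (near0_far _ 1) (near0_inv_far _).
apply: near0_mono far => g _ far; have g0 := normc_ge0 g.
apply: le_trans (ler_normc_sum _ _ _) _; rewrite mulr_suml ler_sum // => a _.
apply: le_trans (ler_normc_sum _ _ _) _; rewrite mulr_suml ler_sum // => p _.
have [far1 far2] := far a; rewrite addrAC; set u := y - zp a - g^-1 in far1 far2 *.
have u0 : 0 < normc u by lra.
have Fu : normc (F a p) / normc u <= 2 * normc (F a p) * normc g.
  by rewrite ler_pdivrMr //; have := normc_ge0 (F a p); nra.
apply: le_trans Fu; rewrite normcM normcV normcX ler_wpM2l ?normc_ge0 //.
rewrite lef_pV2 ?posrE ?exprn_gt0 // exprS ler_peMr ?normc_ge0 //.
exact: exprn_ege1.
Qed.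

Lemma chi_far (l : T -> nat -> R[i]) (y : R[i]) :
  exists B : R, near0 (fun g => normc (chi m zp l (y - g^-1)) <= B * normc g).
Proof. exact: (pole_sum_far l (fun _ p => p)). Qed.

Lemma dchi_far (l : T -> nat -> R[i]) (y : R[i]) :
  exists B : R, near0 (fun g => normc (dchi m zp l (y - g^-1)) <= B * normc g).
Proof. exact: (pole_sum_far (fun a p => - p.+1%:R * l a p) (fun _ p => p.+1)). Qed.

End PoleSumsFar.

Section PolyFacts.
Variable F : fieldType.

Lemma horner_deriv_prod (I : eqType) (s : seq I) (P : I -> {poly F}) (x : F) :
  (forall i, i \in s -> (P i).[x] != 0) ->
  (\prod_(i <- s) P i)^`().[x] = (\prod_(i <- s) P i).[x] * \sum_(i <- s) (P i)^`().[x] / (P i).[x].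
Proof.
elim: s => [|i s IHs] Px0; first by rewrite !big_nil mulr0 -polyC1 derivC horner0.
rewrite !big_cons derivM !hornerE IHs => [|j js]; last by rewrite Px0 // in_cons js orbT.
by field; rewrite Px0 ?mem_head.
Qed.

Lemma horner_logderiv_split (c : F) (rs : seq F) (x : F) :
  (c *: \prod_(r <- rs) ('X - r%:P)).[x] != 0 ->
  (c *: \prod_(r <- rs) ('X - r%:P))^`().[x] / (c *: \prod_(r <- rs) ('X - r%:P)).[x] =
  \sum_(r <- rs) (x - r)^-1.
Proof.
set P := _ *: _ => Px0.
have c0 : c != 0 by apply: contraNneq Px0 => c0; rewrite /P c0 scale0r horner0.
have rsx : forall r, r \in rs -> ('X - r%:P).[x] != 0.
  move=> r r_rs; apply: contraNneq Px0 => rx0; rewrite /P hornerZ horner_prod.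
  by rewrite (big_rem r) //= rx0 mul0r mulr0.
rewrite /P derivZ !hornerZ horner_deriv_prod // mulrA mulrC mulKf; last first.
  by rewrite mulf_neq0 // horner_prod prodf_seq_neq0; apply/allP => r /rsx ->.
by apply: eq_bigr => r _; rewrite derivXsubC hornerXsubC hornerC div1r.
Qed.

Lemma deriv_prod_XsubC_neq0 (rs : seq F) (r : F) :
  uniq rs -> r \in rs -> (\prod_(z <- rs) ('X - z%:P))^`().[r] != 0.
Proof.
move=> rs_uniq r_rs; rewrite (perm_big _ (perm_to_rem r_rs)) big_cons derivM derivXsubC.
rewrite mul1r !hornerE subrr mul0r addr0 -/(root _ r) root_prod_XsubC.
by rewrite mem_rem_uniqF.
Qed.

End PolyFacts.

Lemma exists_near_of_sum_inv (R : rcfType) (s : seq R[i]) (w : R[i]) (L : R) : 0 < L ->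
  L <= normc (\sum_(r <- s) (w - r)^-1) -> exists2 r, r \in s & normc (w - r) * L <= (size s)%:R.
Proof.
move=> L0 hL; have [/hasP[r r_s hr]|/hasPn far] :=
  boolP (has (fun r => normc (w - r) * L <= (size s)%:R) s); first by exists r.
exfalso; case: s hL far => [|r0 s] hL far; first by rewrite big_nil normc0 in hL; lra.
set n := size (r0 :: s); have n0 : 0 < n%:R :> R by rewrite ltr0n.
suff : normc (\sum_(r <- r0 :: s) (w - r)^-1) < L by lra.
apply: le_lt_trans (ler_normc_sum _ _ _) _.
have -> : L = \sum_(0 <= i < n) L / n%:R.
  by rewrite sumr_const_nat subn0 -(mulr_natr (L / n%:R)) mulfVK ?gt_eqF.
rewrite (big_nth r0); apply: ltr_sum_nat => // i /andP[_ lt_in].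
have := far _ (mem_nth r0 lt_in); rewrite -ltNge => hi.
have wr0 : 0 < normc (w - nth r0 (r0 :: s) i) by have := normc_ge0 (w - nth r0 (r0 :: s) i); nra.
by rewrite normcV -invf_div ltf_pV2 ?posrE ?divr_gt0 // ltr_pdivrMr.
Qed.

Section NumeratorPolynomial.
Variables (R : realType) (T : finType) (m : T -> nat) (zp : T -> R[i]) (c : T -> nat -> R[i]).
Variable linf : R[i].
Implicit Type x : R[i].
Local Notation M := (\sum_a m a)%N.

Definition denom_poly : {poly R[i]} := \prod_a ('X - (zp a)%:P) ^+ m a.

Definition numer_poly : {poly R[i]} :=
  \sum_a \sum_(p < m a) c a p *: (denom_poly %/ ('X - (zp a)%:P) ^+ p.+1) - linf *: denom_poly.

Lemma dvdp_denom_poly a p : (p < m a)%N -> ('X - (zp a)%:P) ^+ p.+1 %| denom_poly.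
Proof. by move=> lt_pm; rewrite /denom_poly (bigD1 a) //= dvdp_mulr // dvdp_exp2l. Qed.

Lemma denom_poly_neq0 x : (forall a, x != zp a) -> denom_poly.[x] != 0.
Proof.
move=> xP; rewrite horner_prod; apply/prodf_neq0 => a _.
by rewrite horner_exp hornerXsubC expf_neq0 // subr_eq0.
Qed.

Lemma horner_divp_denom_poly a p x : (p < m a)%N -> x != zp a ->
  (denom_poly %/ ('X - (zp a)%:P) ^+ p.+1).[x] = denom_poly.[x] / (x - zp a) ^+ p.+1.
Proof.
move=> lt_pm xa; have xa0 : (x - zp a) ^+ p.+1 != 0 by rewrite expf_neq0 // subr_eq0.
by rewrite -[in RHS](divpK (dvdp_denom_poly lt_pm)) hornerM horner_exp hornerXsubC mulfK.
Qed.

Lemma horner_deriv_divp_denom_poly a p x : (p < m a)%N -> x != zp a ->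
  (denom_poly %/ ('X - (zp a)%:P) ^+ p.+1)^`().[x] =
  denom_poly^`().[x] / (x - zp a) ^+ p.+1 - p.+1%:R * denom_poly.[x] / (x - zp a) ^+ p.+2.
Proof.
move=> lt_pm xa; have := horner_divp_denom_poly lt_pm xa.
have := divpK (dvdp_denom_poly lt_pm); set E := _ %/ _ => DE Ex.
rewrite -[in denom_poly^`()]DE derivM deriv_exp derivXsubC mul1r !hornerE hornerMn.
rewrite horner_exp hornerXsubC -[in RHS]DE hornerM horner_exp hornerXsubC.
have xa0 : x - zp a != 0 by rewrite subr_eq0.
by rewrite -mulr_natl !exprS; field; rewrite xa0 expf_neq0.
Qed.

Lemma horner_numer_poly x : (forall a, x != zp a) ->
  numer_poly.[x] = denom_poly.[x] * phi m zp c linf x.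
Proof.
move=> xP; rewrite /numer_poly /phi /chi !hornerE horner_sum mulrBr mulr_sumr mulrC.
congr (_ - _); apply: eq_bigr => a _; rewrite horner_sum mulr_sumr.
by apply: eq_bigr => p _; rewrite hornerZ horner_divp_denom_poly // mulrCA mulrA.
Qed.

Lemma horner_deriv_numer_poly x : (forall a, x != zp a) ->
  numer_poly^`().[x] =
  denom_poly^`().[x] * phi m zp c linf x + denom_poly.[x] * dchi m zp c x.
Proof.
move=> xP; rewrite /numer_poly /phi /chi /dchi derivB derivZ !raddf_sum /= !hornerE.
rewrite !horner_sum mulrBr !mulr_sumr addrAC -big_split /= mulrC; congr (_ - _).
apply: eq_bigr => a _; rewrite raddf_sum horner_sum !mulr_sumr -big_split /=.
by apply: eq_bigr => p _; rewrite derivZ hornerZ horner_deriv_divp_denom_poly //; ring.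
Qed.

Lemma horner_deriv_denom_poly x : (forall a, x != zp a) ->
  denom_poly^`().[x] = denom_poly.[x] * \sum_a (m a)%:R / (x - zp a).
Proof.
move=> xP; rewrite /denom_poly horner_deriv_prod => [|a _]; last first.
  by rewrite horner_exp hornerXsubC expf_neq0 // subr_eq0.
congr (_ * _); apply: eq_bigr => a _; have xa0 : x - zp a != 0 by rewrite subr_eq0.
rewrite deriv_exp derivXsubC mul1r hornerMn !horner_exp hornerXsubC.
by case: (m a) => [|n]; rewrite ?mulr0n ?mul0r // -mulr_natl exprS; field; rewrite xa0 expf_neq0.
Qed.

Lemma size_denom_poly : size denom_poly = M.+1.
Proof.
rewrite size_prod => [|a _]; last by rewrite expf_neq0 // polyXsubC_eq0.
under eq_bigr do rewrite size_exp_XsubC -addn1.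
by rewrite big_split /= sum1_card -addSn addnK.
Qed.

Lemma size_numer_poly : linf != 0 -> size numer_poly = M.+1.
Proof.
move=> linf0; rewrite /numer_poly addrC size_polyDl size_polyN size_scale // size_denom_poly //.
rewrite ltnS; apply: (big_ind (fun q : {poly R[i]} => size q <= M)%N) => [|p q|a _].
- by rewrite size_poly0.
- by move=> sp sq; apply: leq_trans (size_polyD _ _) _; rewrite geq_max sp sq.
apply: (big_ind (fun q : {poly R[i]} => size q <= M)%N) => [|p q|p _].
- by rewrite size_poly0.
- by move=> sp sq; apply: leq_trans (size_polyD _ _) _; rewrite geq_max sp sq.
apply: leq_trans (size_scale_leq _ _) _.
by rewrite size_divp ?expf_neq0 ?polyXsubC_eq0 // size_denom_poly size_exp_XsubC /= subSS leq_subr.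
Qed.

Lemma root_numer_poly x : (forall a, x != zp a) ->
  root numer_poly x = (phi m zp c linf x == 0).
Proof.
by move=> xP; rewrite rootE horner_numer_poly // mulf_eq0 (negbTE (denom_poly_neq0 xP)).
Qed.

Lemma numer_poly_split : linf != 0 ->
  exists2 rs : seq R[i], size rs = M &
    numer_poly = lead_coef numer_poly *: \prod_(r <- rs) ('X - r%:P).
Proof.
move=> linf0; have [rs Qrs] := closed_field_poly_normal numer_poly; exists rs => //.
have lc0 : lead_coef numer_poly != 0 by rewrite lead_coef_eq0 -size_poly_eq0 size_numer_poly.
by have := size_numer_poly linf0; rewrite {1}Qrs size_scale // size_prod_XsubC => -[].
Qed.

Lemma numer_poly_root_near x (A B : R) : linf != 0 -> (forall a, x != zp a) ->
  normc (\sum_a (m a)%:R / (x - zp a)) <= B -> 0 < A -> A <= normc (dchi m zp c x) ->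
  2 * B * normc (phi m zp c linf x) <= A ->
  exists2 r, root numer_poly r & normc (x - r) * A <= 2 * M%:R * normc (phi m zp c linf x).
Proof.
move=> linf0 xP hB A0 hA hphi; set f := phi m zp c linf x in hphi *.
have [f0|f0] := eqVneq f 0.
  exists x; first by rewrite root_numer_poly // -/f f0.
  by rewrite f0 subrr !normc0 mul0r mulr0.
have f0' : 0 < normc f by rewrite normc_gt0.
have [rs size_rs Qrs] := numer_poly_split linf0.
have Qx0 : numer_poly.[x] != 0 by rewrite horner_numer_poly // mulf_neq0 ?denom_poly_neq0.
have sum_rs : \sum_(r <- rs) (x - r)^-1 = \sum_a (m a)%:R / (x - zp a) + dchi m zp c x / f.
  rewrite -(horner_logderiv_split (c := lead_coef numer_poly)) -Qrs //.
  rewrite horner_deriv_numer_poly // horner_numer_poly // horner_deriv_denom_poly // -/f; field.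
  by rewrite f0 denom_poly_neq0.
have L0 : 0 < A / (2 * normc f) by rewrite divr_gt0 ?mulr_gt0.
have hL : A / (2 * normc f) <= normc (\sum_(r <- rs) (x - r)^-1).
  have hdf : A / normc f <= normc (dchi m zp c x / f).
    by rewrite normcM normcV ler_wpM2r ?invr_ge0 ?normc_ge0.
  have hBf : B <= A / (2 * normc f) by rewrite ler_pdivlMr ?mulr_gt0 //; lra.
  have halve : A / (2 * normc f) = A / normc f - A / (2 * normc f) by field; rewrite gt_eqF.
  rewrite sum_rs addrC; have := lerB_distc (dchi m zp c x / f) (- \sum_a (m a)%:R / (x - zp a)).
  rewrite opprK normcN; lra.
have [r r_rs hr] := exists_near_of_sum_inv L0 hL.
exists r; first by rewrite rootE Qrs hornerZ mulf_eq0 -rootE root_prod_XsubC r_rs orbT.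
by move: hr; rewrite size_rs mulrA ler_pdivrMr ?mulr_gt0 //; lra.
Qed.

Lemma distinct_zeros_labelling n (z : 'I_n -> R[i]) : linf != 0 -> n = M -> injective z ->
  (forall k, is_zero1 m zp c linf (z k)) ->
  labelling (is_zero1 m zp c linf) z /\ forall k, simple_zero1 m zp c linf (z k).
Proof.
move=> linf0 nM z_inj zP; set s := [seq z k | k <- enum 'I_n].
have s_uniq : uniq s by rewrite map_inj_uniq ?enum_uniq.
have [rs size_rs Qrs] := numer_poly_split linf0.
have lc0 : lead_coef numer_poly != 0 by rewrite lead_coef_eq0 -size_poly_eq0 size_numer_poly.
have rootQ r : root numer_poly r = (r \in rs).
  by rewrite rootE Qrs hornerZ mulf_eq0 (negbTE lc0) -rootE root_prod_XsubC.
have s_rs : {subset s <= rs}.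
  by move=> _ /mapP[k _ ->]; have [zkP zk0] := zP k; rewrite -rootQ root_numer_poly // zk0.
have size_s : (size rs <= size s)%N by rewrite size_map size_enum_ord size_rs nM.
have rs_uniq := leq_size_uniq s_uniq s_rs size_s.
have [_ eq_s_rs] := uniq_min_size s_uniq s_rs size_s.
split.
  split=> //; split=> // x [xP phix].
  have : x \in s by rewrite eq_s_rs -rootQ root_numer_poly // phix.
  by case/mapP=> k _ ->; exists k.
move=> k; have [zkP zk0] := zP k; split=> //.
have := deriv_prod_XsubC_neq0 rs_uniq (s_rs _ (map_f _ (mem_enum _ k))).
apply: contraNneq => dchi0; apply/eqP/(mulfI lc0).
by rewrite -hornerZ -derivZ -Qrs horner_deriv_numer_poly // zk0 dchi0 !mulr0 addr0.
Qed.

End NumeratorPolynomial.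

Section MergedConfiguration.
Variables (R : realType) (S1 S2 : finType).
Variables (m1 : S1 -> nat) (zp1 : S1 -> R[i]) (l1 : S1 -> nat -> R[i]).
Variables (m2 : S2 -> nat) (zp2 : S2 -> R[i]) (l2 : S2 -> nat -> R[i]).
Variable linf : R[i].
Implicit Types x y g : R[i].

Definition mult12 (t : S1 + S2) : nat := match t with inl a => m1 a | inr b => m2 b end.

Definition pole12 (g : R[i]) (t : S1 + S2) : R[i] :=
  match t with inl a => zp1 a | inr b => zp2 b + g^-1 end.

Definition coef12 (t : S1 + S2) : nat -> R[i] :=
  match t with inl a => l1 a | inr b => l2 b end.

Lemma sum_mult12 : (\sum_t mult12 t = \sum_a m1 a + \sum_b m2 b)%N.
Proof. by rewrite big_sumType. Qed.

Lemma chi12 g x : chi mult12 (pole12 g) coef12 x = chi m1 zp1 l1 x + chi m2 zp2 l2 (x - g^-1).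
Proof.
rewrite /chi big_sumType; congr (_ + _); apply: eq_bigr => b _.
by apply: eq_bigr => p _; rewrite /= opprD addrA addrAC.
Qed.

Lemma dphi12E g x : dphi12 m1 zp1 l1 m2 zp2 l2 g x = dchi mult12 (pole12 g) coef12 x.
Proof.
rewrite /dphi12 /dchi big_sumType; congr (_ + _); apply: eq_bigr => b _.
by apply: eq_bigr => p _; rewrite /= opprD addrA addrAC.
Qed.

Lemma phi12E g x : phi12 m1 zp1 l1 m2 zp2 l2 linf g x = phi mult12 (pole12 g) coef12 linf x.
Proof. by rewrite /phi chi12. Qed.

Lemma is_zero12E g x :
  is_zero12 m1 zp1 l1 m2 zp2 l2 linf g x <-> is_zero1 mult12 (pole12 g) coef12 linf x.
Proof.
rewrite /is_zero12 /is_zero1 phi12E; split=> [[P1 [P2 ->]]|[P ->]]; first by split=> //; case.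
by split; [move=> a; apply: (P (inl a)) | split=> // b; apply: (P (inr b))].
Qed.

Lemma simple_zero12E g x :
  simple_zero12 m1 zp1 l1 m2 zp2 l2 linf g x <-> simple_zero1 mult12 (pole12 g) coef12 linf x.
Proof. by rewrite /simple_zero12 /simple_zero1 dphi12E is_zero12E. Qed.

Lemma normc_sum_mult12 g x : (forall b, 1 <= normc (x - zp2 b - g^-1)) ->
  normc (\sum_t (mult12 t)%:R / (x - pole12 g t)) <=
  \sum_a (m1 a)%:R / normc (x - zp1 a) + (\sum_b m2 b)%:R.
Proof.
move=> far2; apply: le_trans (ler_normc_sum _ _ _) _; rewrite big_sumType natr_sum /=.
apply: lerD; apply: ler_sum => t _; rewrite normcM normcV normc_nat //.
by rewrite opprD addrA ler_piMr ?invf_le1 //; have := far2 t; lra.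
Qed.

Lemma phi12_zero1 g x : phi m1 zp1 l1 linf x = 0 ->
  phi mult12 (pole12 g) coef12 linf x = chi m2 zp2 l2 (x - g^-1).
Proof. by rewrite /phi chi12 addrAC => ->; rewrite add0r. Qed.

Lemma pole12_free_near g x y (e : R) : normc (x - y) <= e ->
  (forall a, e < normc (x - zp1 a)) -> (forall b, e < normc (x - zp2 b - g^-1)) ->
  forall t, y != pole12 g t.
Proof.
move=> near_xy far1 far2 [a|b] /=; rewrite -subr_eq0 -normc_gt0.
  have := lerB_distc (x - zp1 a) (x - y).
  have -> : x - zp1 a - (x - y) = y - zp1 a by ring.
  by have := far1 a; lra.
have := lerB_distc (x - zp2 b - g^-1) (x - y).
have -> : x - zp2 b - g^-1 - (x - y) = y - (zp2 b + g^-1) by ring.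
by have := far2 b; lra.
Qed.

End MergedConfiguration.

Section ZerosNearSimpleZeros.
Variables (R : realType) (S1 S2 : finType).
Variables (m1 : S1 -> nat) (zp1 : S1 -> R[i]) (l1 : S1 -> nat -> R[i]).
Variables (m2 : S2 -> nat) (zp2 : S2 -> R[i]) (l2 : S2 -> nat -> R[i]).
Variable linf : R[i].
Hypothesis linf0 : linf != 0.
Implicit Type zeta : R[i].
Local Notation M := (\sum_a m1 a + \sum_b m2 b)%N.

Lemma near0_zero12_near_zero1 zeta : simple_zero1 m1 zp1 l1 linf zeta ->
  exists K : R, near0 (fun g =>
    exists2 r, is_zero12 m1 zp1 l1 m2 zp2 l2 linf g r & normc (r - zeta) <= K * normc g).
Proof.
move=> [[zetaP phi_zeta] dchi_zeta].
set A := normc (dchi m1 zp1 l1 zeta); have A0 : 0 < A by rewrite normc_gt0.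
have [B2 far_chi] := chi_far m2 zp2 l2 zeta.
have [B3 far_dchi] := dchi_far m2 zp2 l2 zeta.
set B := \sum_a (m1 a)%:R / normc (zeta - zp1 a) + (\sum_b m2 b)%:R.
have B0 : 0 <= B by rewrite addr_ge0 // sumr_ge0 // => a _; rewrite divr_ge0 ?normc_ge0.
set K := 4 * M%:R * B2 / A; exists K.
have far_poles : near0 (fun g =>
    (forall a, K * normc g < normc (zeta - zp1 a)) /\ forall b, 1 <= normc (zeta - zp2 b - g^-1)).
  apply: near0_and; apply: near0_forall => [a]; last exact: near0_far.
  by apply: near0_lt_mul; rewrite normc_gt0 subr_eq0.
have small : near0 (fun g =>
    [/\ K * normc g < 1, B3 * normc g < A / 2 & 2 * B * B2 * normc g < A / 2]).
  have A20 : 0 < A / 2 by lra.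
  apply: near0_mono (near0_and (near0_lt_mul K ltr01)
    (near0_and (near0_lt_mul B3 A20) (near0_lt_mul (2 * B * B2) A20))) => g _ [? [? ?]].
  by split.
apply: near0_mono (near0_and far_poles (near0_and far_chi (near0_and far_dchi small))).
move=> g _ [[far1 far2] [hchi [hdchi [smallK smallB3 smallB]]]].
have zeta_free : forall t, zeta != pole12 zp1 zp2 g t.
  apply: (pole12_free_near (x := zeta) (e := 0)) => [|a|b]; first by rewrite subrr normc0.
    by rewrite normc_gt0 subr_eq0.
  by have := far2 b; lra.
have hA : A / 2 <= normc (dchi (mult12 m1 m2) (pole12 zp1 zp2 g) (coef12 l1 l2) zeta).
  rewrite -dphi12E; have := lerB_distc (dchi m1 zp1 l1 zeta) (- dchi m2 zp2 l2 (zeta - g^-1)).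
  by rewrite opprK normcN -/A; lra.
have hphi : 2 * B * normc (chi m2 zp2 l2 (zeta - g^-1)) <= A / 2.
  by apply: le_trans (ltW smallB); rewrite -[_ * B2 * _]mulrA ler_wpM2l ?mulr_ge0.
rewrite -(phi12_zero1 m2 zp2 l2 g phi_zeta) in hphi.
have [r root_r near_r] := numer_poly_root_near linf0 zeta_free
  (normc_sum_mult12 m1 zp1 m2 far2) (A := A / 2) ltac:(lra) hA hphi.
have {}near_r : normc (zeta - r) <= K * normc g.
  rewrite -(ler_pM2r (_ : 0 < A / 2)); last lra.
  apply: le_trans near_r _; rewrite phi12_zero1 // sum_mult12.
  have -> : K * normc g * (A / 2) = 2 * M%:R * (B2 * normc g) by rewrite /K; field; rewrite gt_eqF.
  by rewrite ler_wpM2l ?mulr_ge0.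
have r_free := pole12_free_near near_r far1 (fun b => lt_le_trans smallK (far2 b)).
exists r; last by rewrite normcB.
by apply/is_zero12E; split=> //; apply/eqP; rewrite -root_numer_poly.
Qed.

End ZerosNearSimpleZeros.

Section ZerosNearShiftedZeros.
Variables (R : realType) (S1 S2 : finType).
Variables (m1 : S1 -> nat) (zp1 : S1 -> R[i]) (l1 : S1 -> nat -> R[i]).
Variables (m2 : S2 -> nat) (zp2 : S2 -> R[i]) (l2 : S2 -> nat -> R[i]).
Variable linf : R[i].
Hypothesis linf0 : linf != 0.
Implicit Types g y : R[i].

Lemma is_zero12_swap g y : is_zero12 m2 zp2 l2 m1 zp1 l1 linf (- g) y ->
  is_zero12 m1 zp1 l1 m2 zp2 l2 linf g (y + g^-1).
Proof.
move=> [P2 [P1 phi0]]; split=> [a|].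
  by apply: contraNneq (P1 a) => <-; rewrite invrN addrK.
split=> [b|]; first by rewrite (inj_eq (addIr _)) P2.
by rewrite -phi0 /phi12 invrN opprK addrK [chi m1 _ _ _ + _]addrC.
Qed.

Lemma near0_zero12_near_zero2 zeta : simple_zero1 m2 zp2 l2 linf zeta ->
  exists K : R, near0 (fun g =>
    exists2 r, is_zero12 m1 zp1 l1 m2 zp2 l2 linf g r & normc (r - (g^-1 + zeta)) <= K * normc g).
Proof.
move=> /(near0_zero12_near_zero1 m1 zp1 l1 linf0)[K near_K]; exists K.
apply: near0_mono (near0_opp near_K) => g _ [r Zr near_r]; exists (r + g^-1).
  exact: is_zero12_swap.
have -> : r + g^-1 - (g^-1 + zeta) = r - zeta by ring.
by rewrite normcN in near_r.
Qed.

End ZerosNearShiftedZeros.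

Section SeparatedPoints.
Variables (R : rcfType) (I : eqType) (t : I -> R[i]).

Lemma separated_index_eq (x : R[i]) (e e' : R) k k' :
  (k != k' -> e + e' < normc (t k - t k')) ->
  normc (x - t k) <= e -> normc (x - t k') <= e' -> k = k'.
Proof.
move=> sep xk xk'; apply/eqP/negPn/negP => /sep; rewrite ltNge => /negP; apply.
by have := le_normcD (t k - x) (x - t k'); rewrite addrA subrK normcB; lra.
Qed.

Lemma eq_near_separated (Z : R[i] -> Prop) (z z' : I -> R[i]) (e e' : R) :
  (forall k k', k != k' -> e + e' < normc (t k - t k')) ->
  (forall x, Z x -> exists k, z k = x) -> (forall k, Z (z' k)) ->
  (forall k, normc (z k - t k) <= e) -> (forall k, normc (z' k - t k) <= e') -> z' = z.
Proof.
move=> sep z_onto Zz' near_z near_z'; apply: functional_extensionality => k.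
have [k' zk'] := z_onto _ (Zz' k).
by rewrite -zk' (separated_index_eq (sep k' k) (x := z k')) // zk'.
Qed.

End SeparatedPoints.

Lemma labelling_equiv (R : realType) n (Z Z' : R[i] -> Prop) (z : 'I_n -> R[i]) :
  (forall x, Z x <-> Z' x) -> labelling Z z -> labelling Z' z.
Proof.
move=> ZZ' [z_inj [Zz z_onto]]; split=> //; split=> [k|x /ZZ' Zx]; first exact/ZZ'.
exact: z_onto.
Qed.

Section CanonicalLabelling.
Variables (R : realType) (S1 S2 : finType).
Variables (m1 : S1 -> nat) (zp1 : S1 -> R[i]) (l1 : S1 -> nat -> R[i]).
Variables (m2 : S2 -> nat) (zp2 : S2 -> R[i]) (l2 : S2 -> nat -> R[i]).
Variable linf : R[i].
Local Notation M1 := (\sum_a m1 a)%N.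
Local Notation M2 := (\sum_b m2 b)%N.
Variables (zeta1 : 'I_M1 -> R[i]) (zeta2 : 'I_M2 -> R[i]).
Hypotheses (linf0 : linf != 0) (zeta1_inj : injective zeta1) (zeta2_inj : injective zeta2).
Hypothesis zeta1_simple : forall i, simple_zero1 m1 zp1 l1 linf (zeta1 i).
Hypothesis zeta2_simple : forall j, simple_zero1 m2 zp2 l2 linf (zeta2 j).
Local Notation Z g := (is_zero12 m1 zp1 l1 m2 zp2 l2 linf g).
Implicit Types g : R[i].

Definition target g (k : 'I_(M1 + M2)) : R[i] :=
  match split k with inl i => zeta1 i | inr j => g^-1 + zeta2 j end.

Lemma target_lshift g i : target g (lshift M2 i) = zeta1 i.
Proof. by rewrite /target (unsplitK (inl _ i)). Qed.

Lemma target_rshift g j : target g (rshift M1 j) = g^-1 + zeta2 j.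
Proof. by rewrite /target (unsplitK (inr _ j)). Qed.

Lemma near0_zeros_near_targets : exists K : R,
  near0 (fun g => forall k, exists2 r, Z g r & normc (r - target g k) <= K * normc g).
Proof.
apply: near0_forall_bound => [k K K' g le_KK' [r Zr near_r]|k].
  by exists r => //; apply: le_trans near_r (ler_wpM2r (normc_ge0 g) le_KK').
rewrite /target; case: (split k) => [i|j].
  exact (near0_zero12_near_zero1 m2 zp2 l2 linf0 (zeta1_simple i)).
exact (near0_zero12_near_zero2 m1 zp1 l1 linf0 (zeta2_simple j)).
Qed.

Lemma near0_targets_separated (K : R) :
  near0 (fun g => forall k k' : 'I_(M1 + M2),
    k != k' -> K * normc g < normc (target g k - target g k')).
Proof.
have near_far (y : R[i]) : near0 (fun g => K * normc g < normc (y - g^-1)).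
  apply: near0_mono (near0_and (near0_far y 1) (near0_lt_mul K ltr01)) => g _ [? ?].
  lra.
apply: near0_forall => k; apply: near0_forall => k'; rewrite /target.
case: split_ordP => [i ->|j ->]; case: split_ordP => [i' ->|j' ->];
  rewrite ?eq_lshift ?eq_rshift ?eq_lrshift ?eq_rlshift.
- have [->|ne] := eqVneq i i'; first by exists 1 => //; rewrite eqxx.
  have d0 : 0 < normc (zeta1 i - zeta1 i') by rewrite normc_gt0 subr_eq0 (inj_eq zeta1_inj).
  by apply: near0_mono (near0_lt_mul K d0) => g _ ? _.
- apply: near0_mono (near_far (zeta1 i - zeta2 j')) => g _ ? _.
  by rewrite opprD addrA addrAC.
- apply: near0_mono (near_far (zeta1 i' - zeta2 j)) => g _ ? _.
  by rewrite normcB opprD addrA addrAC.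
- have [->|ne] := eqVneq j j'; first by exists 1 => //; rewrite eqxx.
  have d0 : 0 < normc (zeta2 j - zeta2 j') by rewrite normc_gt0 subr_eq0 (inj_eq zeta2_inj).
  apply: near0_mono (near0_lt_mul K d0) => g _ ? _.
  by rewrite opprD addrACA subrr add0r.
Qed.

Definition zero12_near_target (K : R) g k : R[i] :=
  epsilon (inhabits 0) (fun r => Z g r /\ normc (r - target g k) <= K * normc g).

Lemma near0_zero12_near_target (K : R) :
  near0 (fun g => forall k, exists2 r, Z g r & normc (r - target g k) <= K * normc g) ->
  near0 (fun g => [/\ labelling (Z g) (zero12_near_target K g),
    forall k, simple_zero12 m1 zp1 l1 m2 zp2 l2 linf g (zero12_near_target K g k) &
    forall k, normc (zero12_near_target K g k - target g k) <= K * normc g]).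
Proof.
move=> near_K; apply: near0_mono (near0_and near_K (near0_targets_separated (K + K))).
move=> g _ [exK sep]; rewrite mulrDl in sep; set z := zero12_near_target K g.
have zP k : Z g (z k) /\ normc (z k - target g k) <= K * normc g.
  have [r Zr near_r] := exK k.
  by apply: (epsilon_spec _ (fun r => Z g r /\ normc (r - target g k) <= K * normc g)); exists r.
have z_inj : injective z.
  move=> k k' zkk'; apply: (separated_index_eq (sep k k') (zP k).2).
  by rewrite zkk' (zP k').2.
have Z12 x : Z g x <-> is_zero1 (mult12 m1 m2) (pole12 zp1 zp2 g) (coef12 l1 l2) linf x.
  exact: is_zero12E.
have [] := distinct_zeros_labelling linf0 (esym (sum_mult12 m1 m2)) z_inj
  (fun k => (Z12 _).1 (zP k).1).
move=> /(labelling_equiv (fun x => iff_sym (Z12 x))) lab simple.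
by split=> // k; [apply/simple_zero12E | exact: (zP k).2].
Qed.

End CanonicalLabelling.

Lemma lec_normc (R : realType) (x g : R[i]) (K : R) :
  (`|x| <= rC K * `|g|) = (normc x <= K * normc g).
Proof. by rewrite !normcE -[rC K]/(K%:C)%C -rmorphM lecR. Qed.

Lemma ltc_normc (R : realType) (g : R[i]) (d : R) : (`|g| < rC d) = (normc g < d).
Proof. by rewrite normcE -[rC d]/(d%:C)%C ltcR. Qed.

Theorem lemmaC2 (R : realType) (linf : R[i])
  (S1 S2 : finType)
  (m1 : S1 -> nat) (zp1 : S1 -> R[i]) (l1 : S1 -> nat -> R[i])
  (m2 : S2 -> nat) (zp2 : S2 -> R[i]) (l2 : S2 -> nat -> R[i])
  (zeta1 : 'I_(\sum_(a : S1) m1 a) -> R[i])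
  (zeta2 : 'I_(\sum_(b : S2) m2 b) -> R[i]) :
  linf != 0 ->
  (forall a, (0 < m1 a)%N) -> (forall b, (0 < m2 b)%N) ->
  injective zp1 -> injective zp2 ->
  (forall a, l1 a (m1 a).-1 != 0) -> (forall b, l2 b (m2 b).-1 != 0) ->
  (* the zeros of phi_1 are exactly the zeta1 i, and they are simple *)
  labelling (is_zero1 m1 zp1 l1 linf) zeta1 ->
  (forall i, simple_zero1 m1 zp1 l1 linf (zeta1 i)) ->
  (* the zeros of phi_2 are exactly the zeta2 i, and they are simple *)
  labelling (is_zero1 m2 zp2 l2 linf) zeta2 ->
  (forall i, simple_zero1 m2 zp2 l2 linf (zeta2 i)) ->
  let M1 := (\sum_(a : S1) m1 a)%N in
  let M2 := (\sum_(b : S2) m2 b)%N in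
  let Z gam := is_zero12 m1 zp1 l1 m2 zp2 l2 linf gam in
  let asympt (zeta : R[i] -> 'I_(M1 + M2) -> R[i]) :=
    exists (delta K : R), 0 < delta /\
      forall gam : R[i], gam != 0 -> `|gam| < rC delta ->
        labelling (Z gam) (zeta gam) /\
        (forall i : 'I_M1,
            `|zeta gam (lshift M2 i) - zeta1 i| <= rC K * `|gam|) /\
        (forall j : 'I_M2,
            `|zeta gam (rshift M1 j) - (gam^-1 + zeta2 j)| <= rC K * `|gam|) in
  exists zeta : R[i] -> 'I_(M1 + M2) -> R[i],
    (* existence of a labelling with the asymptotics, with simple zeros *)
    asympt zeta /\
    (exists delta : R, 0 < delta /\
      forall gam : R[i], gam != 0 -> `|gam| < rC delta ->
        forall i, simple_zero12 m1 zp1 l1 m2 zp2 l2 linf gam (zeta gam i)) /\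
    (* uniqueness: any labelling with these asymptotics agrees with zeta
       for gamma small enough *)
    (forall zeta' : R[i] -> 'I_(M1 + M2) -> R[i],
       asympt zeta' ->
       exists delta : R, 0 < delta /\
         forall gam : R[i], gam != 0 -> `|gam| < rC delta -> zeta' gam = zeta gam).
Proof.
move=> linf0 _ _ _ _ _ _ [zeta1_inj _] zeta1_simple [zeta2_inj _] zeta2_simple M1 M2 Z asympt.
have [K near_K] := near0_zeros_near_targets linf0 zeta1_simple zeta2_simple.
have [d d0 good] := near0_zero12_near_target linf0 zeta1_inj zeta2_inj near_K.
exists (zero12_near_target zp1 l1 zp2 l2 linf zeta1 zeta2 K); split; [|split].
- exists d, K; split=> // g g0; rewrite ltc_normc => /(good g g0)[lab _ close].
  split=> //; split=> [i|j]; rewrite lec_normc.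
    by rewrite -(target_lshift zeta1 zeta2 g); apply: close.
  by rewrite -(target_rshift zeta1 zeta2 g); apply: close.
- by exists d; split=> // g g0; rewrite ltc_normc => /(good g g0)[].
move=> zeta' [d' [K' [d'0 near_zeta']]].
have [d2 d20 sep] := near0_targets_separated zeta1_inj zeta2_inj (K + K').
exists (Num.min d (Num.min d' d2)); split; first by rewrite !lt_min d0 d'0 d20.
move=> g g0; rewrite ltc_normc !lt_min => /and3P[gd gd' gd2].
have [[_ [Zzeta' _]] [close1' close2']] := near_zeta' g g0 ltac:(by rewrite ltc_normc).
have [[_ [_ lab]] _ close] := good g g0 gd.
apply: (eq_near_separated (e' := K' * normc g) _ lab Zzeta' close) => [k k' kk'|k].
  by rewrite -mulrDl; apply: sep.
case: (split_ordP k) => [i ->|j ->]; rewrite -lec_normc.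
  by rewrite target_lshift; apply: close1'.
by rewrite target_rshift; apply: close2'.
Qed.
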